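(* For every $p\ge2$ and $\alpha\ge0$, the following hold in $\mathbb R^N\setminus\{0\}$: \[ \mathcal L_pd=\frac{(Q-1)|\nabla_{\mathcal L}d|^p}{d},\qquad \nabla_{\mathcal L}|\nabla_{\mathcal L}d|\cdot\nabla_{\mathcal L}d=0,\qquad \operatorname{div}_{\mathcal L}\Big(\frac{|\nabla_{\mathcal L}d|^{\alpha+p-2}\nabla_{\mathcal L}d}{d^{Q-1}}\Big)=0. \]
   Context: Vector fields and operators. On $\mathbb R^N$ take $h\le N$ vector fields $X_i=\sum_{j=1}^N\sigma_{i,j}\partial_{x_j}$ with $\sigma_{i,j},\partial_{x_j}\sigma_{i,j}\in C(\mathbb R^N)$. Let $\sigma=(\sigma_{i,j})$ and $\nabla_{\mathcal L}=(X_1,\dots,X_h)=\sigma\nabla$. Set $\operatorname{div}_{\mathcal L}Z=\operatorname{div}(\sigma^TZ)$ and $\mathcal L_pu=\operatorname{div}_{\mathcal L}(|\nabla_{\mathcal L}u|^{p-2}\nabla_{\mathcal L}u)$. Dilations. There are dilations $\delta_\lambda(x)=(\lambda^{\beta_1}x_1,\dots,\lambda^{\beta_N}x_N)$, $\beta_j>0$, with each $X_i$ homogeneous of degree one: $X_i(f\circ\delta_\lambda)=\lambda(X_if)\circ\delta_\lambda$. Set $Q=\sum_j\beta_j$. The function $d$. $d:\mathbb R^N\to[0,\infty)$ satisfies: (i) $d\in C(\mathbb R^N)\cap C^\infty(\mathbb R^N\setminus\{0\})$; (ii) $d(x)=0$ iff $x=0$; (iii) $d(\delta_\lambda x)=\lambda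 d(x)$; (iv) for every $p\ge2$, $\mathcal L_p(d^{(p-Q)/(p-1)})=0$ in $\mathbb R^N\setminus\{0\}$ if $p\neq Q$, and $\mathcal L_Q(-\ln d)=0$ there if $p=Q$. *)

From HB Require Import structures.
From mathcomp Require Import all_boot all_order all_algebra.
From mathcomp Require Import all_classical all_reals all_analysis.
Set Implicit Arguments. Unset Strict Implicit. Unset Printing Implicit Defensive.
Import Order.TTheory GRing.Theory Num.Theory.
Import numFieldNormedType.Exports.
Local Open Scope classical_set_scope.
Local Open Scope ring_scope.

(* Points of R^N are row vectors 'rV[R]_N; coordinate j of x is x 0 j. *)

Definition ej (R : realType) (N : nat) (j : 'I_N) : 'rV[R]_N := delta_mx 0 j.

Definition pd (R : realType) (N : nat) (j : 'I_N) (f : 'rV[R]_N -> R)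
  : 'rV[R]_N -> R := fun x => derive f x (ej R j).

Definition iter_pd (R : realType) (N : nat) (js : seq 'I_N) (f : 'rV[R]_N -> R)
  : 'rV[R]_N -> R := foldr (fun j g => pd j g) f js.

Definition Cinf_on (R : realType) (N : nat) (U : set 'rV[R]_N) (f : 'rV[R]_N -> R) :=
  forall js : seq 'I_N, forall x, U x ->
    {for x, continuous (iter_pd js f)} /\
    (forall j : 'I_N, derivable (iter_pd js f) x (ej R j)).

Definition C1_partials (R : realType) (N : nat) (f : 'rV[R]_N -> R) :=
  continuous f /\
  (forall (j : 'I_N) x, derivable f x (ej R j)) /\
  (forall j : 'I_N, continuous (pd j f)).

Definition Xfield (R : realType) (h N : nat) (sigma : 'I_h -> 'I_N -> 'rV[R]_N -> R)
  (i : 'I_h) (f : 'rV[R]_N -> R) : 'rV[R]_N -> R :=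
  fun x => \sum_(j < N) sigma i j x * pd j f x.

Definition gradL (R : realType) (h N : nat) (sigma : 'I_h -> 'I_N -> 'rV[R]_N -> R)
  (f : 'rV[R]_N -> R) : 'rV[R]_N -> 'rV[R]_h :=
  fun x => \row_(i < h) Xfield sigma i f x.

Definition divL (R : realType) (h N : nat) (sigma : 'I_h -> 'I_N -> 'rV[R]_N -> R)
  (Z : 'rV[R]_N -> 'rV[R]_h) : 'rV[R]_N -> R :=
  fun x => \sum_(j < N) pd j (fun y => \sum_(i < h) sigma i j y * Z y 0 i) x.

Definition enorm (R : realType) (n : nat) (v : 'rV[R]_n) : R :=
  Num.sqrt (\sum_(i < n) v 0 i ^+ 2).
Definition edot (R : realType) (n : nat) (u v : 'rV[R]_n) : R :=
  \sum_(i < n) u 0 i * v 0 i.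

Definition Lp (R : realType) (h N : nat) (sigma : 'I_h -> 'I_N -> 'rV[R]_N -> R)
  (p : R) (u : 'rV[R]_N -> R) : 'rV[R]_N -> R :=
  divL sigma (fun y => powR (enorm (gradL sigma u y)) (p - 2) *: gradL sigma u y).

Definition dil (R : realType) (N : nat) (beta : 'I_N -> R) (lam : R)
  (x : 'rV[R]_N) : 'rV[R]_N :=
  \row_(j < N) (powR lam (beta j) * x 0 j).

From HB Require Import structures.
From mathcomp Require Import all_boot all_order all_algebra.
From mathcomp Require Import all_classical all_reals all_analysis.
From mathcomp Require Import ring lra.
Import Order.TTheory GRing.Theory Num.Theory.
Import numFieldNormedType.Exports.
Local Open Scope classical_set_scope.
Local Open Scope ring_scope.
Set Implicit Arguments. Unset Strict Implicit. Unset Printing Implicit Defensive.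

(* By the chain rule, the p-flux |grad_L u|^(p-2) grad_L u of u = d^((p-Q)/(p-1))
   (of u = - ln d when p = Q) is a constant multiple of d^(1-Q) F_p, where F_p is
   the p-flux of d. So hypothesis (iv) says div_L (d^(1-Q) F_p) = 0, and the
   product rule turns this into d^(1-Q) L_p d + (1-Q) d^(-Q) |grad_L d|^p = 0,
   the first identity. For p = 3 the flux is |grad_L d| * (d^(1-Q) grad_L d),
   and div_L (d^(1-Q) grad_L d) = 0 (case p = 2), so the product rule leaves
   d^(1-Q) grad_L |grad_L d| . grad_L d = 0. The third field is
   |grad_L d|^(alpha+p-2) times the same divergence-free field, and the product
   rule with this orthogonality gives zero. Where grad_L d vanishes, the
   weights |grad_L d|^s need not be differentiable; they are however continuous
   and multiply a field that vanishes there, which is all the product rule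
   needs at that point. *)

Definition pflux (R : realType) (h N : nat) (sigma : 'I_h -> 'I_N -> 'rV[R]_N -> R)
  (p : R) (u : 'rV[R]_N -> R) (y : 'rV[R]_N) : 'rV[R]_h :=
  enorm (gradL sigma u y) `^ (p - 2) *: gradL sigma u y.

Definition coord_derivable (R : realType) (N h : nat)
  (Z : 'rV[R]_N -> 'rV[R]_h) (x : 'rV[R]_N) :=
  forall (i : 'I_h) (j : 'I_N), derivable (fun y => Z y 0 i) x (ej R j).

Lemma LpE (R : realType) (h N : nat) (sigma : 'I_h -> 'I_N -> 'rV[R]_N -> R) p u :
  Lp sigma p u = divL sigma (pflux sigma p u).
Proof. by []. Qed.

Section DirectionalDerivative.
Variables (R : realType) (N : nat).
Implicit Types (f g : 'rV[R]_N -> R) (x v : 'rV[R]_N).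

Lemma derive_lineE f x v : 'D_v f x = 'D_1 (fun t : R => f (t *: v + x)) 0.
Proof.
rewrite /derive; congr (lim (_ @ 0^')); apply/funext => t /=.
by rewrite addr0 scale0r add0r [_%:A]mulr1.
Qed.

Lemma is_derive_comp f (phi : R -> R) x v df dphi :
  is_derive x v f df -> is_derive (f x) 1 phi dphi ->
  is_derive x v (phi \o f) (dphi * df).
Proof.
move=> [fD f'] [phiD phi'].
have lineD : derivable (fun t : R => f (t *: v + x)) 0 1 by apply/(derivable1P f x v).
have line0 : f (0 *: v + x) = f x by rewrite scale0r add0r.
have phiD' : derivable phi (f (0 *: v + x)) 1 by rewrite line0.
split.
  apply/derivable1P/derivable1_diffP.
  apply: (@differentiable_comp _ _ _ _ (fun t : R => f (t *: v + x)) phi).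
    exact/derivable1_diffP.
  exact/derivable1_diffP.
rewrite derive_lineE -derive1E.
by rewrite (derive1_comp lineD phiD') !derive1E line0 phi' -derive_lineE f'.
Qed.

Lemma derivable_powR f x v s :
  derivable f x v -> 0 < f x -> derivable (fun y => f y `^ s) x v.
Proof.
move=> fD fx_gt0.
by case: (is_derive_comp (derivableP fD) (is_derive1_powR s fx_gt0)).
Qed.

Lemma deriveMr f g x v : derivable f x v -> derivable g x v ->
  'D_v (fun y => f y * g y) x = f x * 'D_v g x + g x * 'D_v f x.
Proof. exact: deriveM. Qed.

Lemma derivable_sumf n (F : 'I_n -> 'rV[R]_N -> R) x v :
  (forall i, derivable (F i) x v) -> derivable (fun y => \sum_(i < n) F i y) x v.
Proof.
move=> FD; have -> : (fun y => \sum_(i < n) F i y) = \sum_(i < n) F i.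
  by apply/funext => y; rewrite fct_sumE.
exact: derivable_sum.
Qed.

Lemma derivable_cvg_line f x v :
  derivable f x v -> (fun t : R => f (t *: v + x)) @ 0^' --> f x.
Proof.
move=> /derivable1P/derivable1_diffP/differentiable_continuous lineC.
have -> : f x = f (0 *: v + x) by rewrite scale0r add0r.
apply: cvg_trans lineC; apply: cvg_app; exact: cvg_within.
Qed.

(* As [f x = 0], the difference quotient of [g * f] at [x] is [g] (along the
   line) times that of [f]. *)
Lemma deriveM_eq0 g f x v : derivable f x v -> f x = 0 ->
  (fun t : R => g (t *: v + x)) @ 0^' --> g x ->
  'D_v (fun y => g y * f y) x = g x * 'D_v f x.
Proof.
move=> fD fx0 gC; rewrite /derive.
have -> : (fun t : R => t^-1 *: (((fun y => g y * f y) \o shift x) (t *: v) - g x * f x))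
  = (fun t : R => g (t *: v + x)) \* (fun t : R => t^-1 *: ((f \o shift x) (t *: v) - f x)).
  by apply/funext => t /=; rewrite fx0 mulr0 !subr0 /GRing.scale /= mulrCA.
exact: cvg_lim (cvgM gC fD).
Qed.

End DirectionalDerivative.

Lemma cvg_powR0 (R : realType) T (F : set_system T) (FF : Filter F) (f : T -> R) s :
  0 <= s -> (forall t, 0 <= f t) -> f @ F --> 0 ->
  (fun t => f t `^ s) @ F --> 0 `^ s.
Proof.
move=> s_ge0 f_ge0 /cvgr0Pnorm_lt f0; have [->|s_neq0] := eqVneq s 0.
  have -> : (fun t => f t `^ 0) = cst 1 by apply/funext => t; rewrite powRr0.
  by rewrite powRr0; exact: cvg_cst.
have s_gt0 : 0 < s by rewrite lt_def s_neq0.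
rewrite powR0 //; apply/cvgr0Pnorm_lt => e e_gt0.
apply: filterS (f0 _ (powR_gt0 (s^-1) e_gt0)) => t.
rewrite !ger0_norm ?powR_ge0 // => fte.
have := gt0_ltr_powR s_gt0 (f_ge0 t) (powR_ge0 e s^-1) fte.
by rewrite -powRrM mulVf // powRr1 // ltW.
Qed.

Lemma powR_normM (R : realType) (k t b r : R) : 0 < t ->
  `|k * t `^ b| `^ r * (k * t `^ b) = `|k| `^ r * k * t `^ (b * (r + 1)).
Proof.
move=> t_gt0; rewrite normrM (ger0_norm (powR_ge0 _ _)).
rewrite powRM ?normr_ge0 ?powR_ge0 // -powRrM mulrDr mulr1.
rewrite powRD; last by rewrite (gt_eqF t_gt0) implybT.
ring.
Qed.

Lemma powR_mul_sqr (R : realType) (a p : R) : 0 <= a -> p != 0 ->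
  a `^ (p - 2) * a ^+ 2 = a `^ p.
Proof.
move=> a_ge0 p_neq0; rewrite -(powR_mulrn 2 a_ge0) -powRD ?subrK //.
by rewrite (negbTE p_neq0).
Qed.

Section Euclidean.
Variables (R : realType) (m : nat).
Implicit Types (u v : 'rV[R]_m).

Lemma edotZl (a : R) u v : edot (a *: u) v = a * edot u v.
Proof. by rewrite /edot mulr_sumr; apply: eq_bigr => i _; rewrite mxE mulrA. Qed.

Lemma edotZr (a : R) u v : edot u (a *: v) = a * edot u v.
Proof. by rewrite /edot mulr_sumr; apply: eq_bigr => i _; rewrite mxE mulrCA. Qed.

Lemma edot0r u : edot u 0 = 0.
Proof. by rewrite /edot big1 // => i _; rewrite mxE mulr0. Qed.

Lemma enorm_ge0 u : 0 <= enorm u.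
Proof. exact: sqrtr_ge0. Qed.

Lemma edotvv u : edot u u = enorm u ^+ 2.
Proof.
rewrite /enorm sqr_sqrtr; last by apply: sumr_ge0 => i _; exact: sqr_ge0.
by apply: eq_bigr => i _; rewrite expr2.
Qed.

Lemma enorm0 : enorm (0 : 'rV[R]_m) = 0.
Proof. by rewrite /enorm big1 ?sqrtr0 // => i _; rewrite mxE expr0n. Qed.

Lemma sqrtr_sqr_enorm u : Num.sqrt (enorm u ^+ 2) = enorm u.
Proof. by rewrite sqrtr_sqr ger0_norm ?enorm_ge0. Qed.

Lemma enormZ (a : R) u : enorm (a *: u) = `|a| * enorm u.
Proof.
rewrite /enorm -sqrtr_sqr -sqrtrM ?sqr_ge0 //; congr Num.sqrt.
by rewrite mulr_sumr; apply: eq_bigr => i _; rewrite mxE exprMn.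
Qed.

Lemma enorm_gt0 u : (0 < enorm u) = (u != 0).
Proof.
rewrite /enorm sqrtr_gt0 lt_def sumr_ge0 ?andbT; last by move=> i _; exact: sqr_ge0.
congr negb; rewrite psumr_eq0; last by move=> i _; exact: sqr_ge0.
apply/idP/eqP => [/allP u0|->]; last by apply/allP => i _; rewrite mxE expr2 mulr0 eqxx.
apply/rowP => i; apply/eqP; rewrite mxE -sqrf_eq0.
exact: implyP (u0 i (mem_index_enum i)) isT.
Qed.

End Euclidean.

Section HorizontalCalculus.
Variables (R : realType) (N h : nat) (sigma : 'I_h -> 'I_N -> 'rV[R]_N -> R).
Implicit Types (u g : 'rV[R]_N -> R) (Z : 'rV[R]_N -> 'rV[R]_h) (x y : 'rV[R]_N).

Lemma gradL_comp u (phi : R -> R) y k :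
  (forall j, derivable u y (ej R j)) -> is_derive (u y) 1 phi k ->
  gradL sigma (fun z => phi (u z)) y = k *: gradL sigma u y.
Proof.
move=> uD phiD; apply/rowP => i; rewrite !mxE /Xfield mulr_sumr.
apply: eq_bigr => j _; rewrite mulrCA; congr (_ * _).
by case: (is_derive_comp (derivableP (uD j)) phiD).
Qed.

Lemma gradL_cst (c : R) y : gradL sigma (fun=> c) y = 0.
Proof.
by apply/rowP => i; rewrite !mxE /Xfield big1 // => j _; rewrite /pd derive_cst mulr0.
Qed.

Lemma pflux_comp p u (phi : R -> R) y k :
  (forall j, derivable u y (ej R j)) -> is_derive (u y) 1 phi k ->
  pflux sigma p (fun z => phi (u z)) y = (`|k| `^ (p - 2) * k) *: pflux sigma p u y.
Proof.
move=> uD phiD; rewrite /pflux (gradL_comp uD phiD) enormZ.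
by rewrite powRM ?normr_ge0 ?enorm_ge0 // !scalerA mulrAC.
Qed.

Lemma pflux2 u : pflux sigma 2 u = gradL sigma u.
Proof. by apply/funext => y; rewrite /pflux subrr powRr0 scale1r. Qed.

Lemma coord_derivableZ g Z x : (forall j, derivable g x (ej R j)) ->
  coord_derivable Z x -> coord_derivable (fun y => g y *: Z y) x.
Proof.
move=> gD ZD i j; have -> : (fun y => (g y *: Z y) 0 i) = (fun y => g y * Z y 0 i).
  by apply/funext => y; rewrite mxE.
exact: derivableM.
Qed.

Lemma divL_near Z1 Z2 x :
  (\forall y \near x, Z1 y = Z2 y) -> divL sigma Z1 x = divL sigma Z2 x.
Proof.
move=> Z12; apply: eq_bigr => j _; apply: near_eq_derive.
by apply: filterS Z12 => y ->.
Qed.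

Hypothesis sigma_derivable : forall i j k x, derivable (sigma i j) x (ej R k).

Lemma derivable_sigmaT Z x j : coord_derivable Z x ->
  derivable (fun y => \sum_(i < h) sigma i j y * Z y 0 i) x (ej R j).
Proof. by move=> ZD; apply: derivable_sumf => i; apply: derivableM. Qed.

Let sigmaT_scale g Z j :
  (fun y => \sum_(i < h) sigma i j y * (g y *: Z y) 0 i) =
  (fun y => g y * \sum_(i < h) sigma i j y * Z y 0 i).
Proof.
by apply/funext => y; rewrite mulr_sumr; apply: eq_bigr => i _; rewrite mxE mulrCA.
Qed.

Lemma divL_scalar_mul g Z x :
  (forall j, derivable g x (ej R j)) -> coord_derivable Z x ->
  divL sigma (fun y => g y *: Z y) x = g x * divL sigma Z x + edot (gradL sigma g x) (Z x).
Proof.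
move=> gD ZD; rewrite /divL /pd mulr_sumr.
under eq_bigr => j _ do rewrite sigmaT_scale (deriveMr (gD j) (derivable_sigmaT (j := j) ZD)).
rewrite big_split /=; congr (_ + _).
rewrite /edot; under eq_bigr do rewrite mulr_suml.
rewrite exchange_big /=; apply: eq_bigr => i _.
by rewrite mxE /Xfield mulr_suml; apply: eq_bigr => j _; rewrite mulrAC.
Qed.

Lemma divLZ (c : R) Z x : coord_derivable Z x ->
  divL sigma (fun y => c *: Z y) x = c * divL sigma Z x.
Proof.
move=> ZD; rewrite (divL_scalar_mul (g := fun=> c)) // gradL_cst.
by rewrite /edot big1 ?addr0 // => i _; rewrite mxE mul0r.
Qed.

Lemma divL_scalar_mul_eq0 g Z x : coord_derivable Z x -> Z x = 0 ->
  (forall j, (fun t : R => g (t *: ej R j + x)) @ 0^' --> g x) ->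
  divL sigma (fun y => g y *: Z y) x = g x * divL sigma Z x.
Proof.
move=> ZD Zx0 gC; rewrite /divL /pd mulr_sumr; apply: eq_bigr => j _.
rewrite sigmaT_scale deriveM_eq0 //; first exact: derivable_sigmaT.
by rewrite Zx0 big1 // => i _; rewrite mxE mulr0.
Qed.

End HorizontalCalculus.

Section Gauge.
Variables (R : realType) (N h : nat) (sigma : 'I_h -> 'I_N -> 'rV[R]_N -> R).
Variables (d : 'rV[R]_N -> R) (Q : R).
Hypothesis sigma_derivable : forall i j k x, derivable (sigma i j) x (ej R k).
Hypothesis d_smooth : Cinf_on [set x | x != 0] d.
Hypothesis d_gt0 : forall x, x != 0 -> 0 < d x.
Hypothesis d_fundamental : forall p : R, 2 <= p ->
  (p != Q -> forall x, x != 0 ->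
     Lp sigma p (fun y => powR (d y) ((p - Q) / (p - 1))) x = 0) /\
  (p = Q -> forall x, x != 0 -> Lp sigma Q (fun y => - ln (d y)) x = 0).

Local Notation G := (gradL sigma d).
Implicit Types (x y : 'rV[R]_N).

Lemma derivable_d x j : x != 0 -> derivable d x (ej R j).
Proof. by move=> x0; exact: (d_smooth [::] x0).2. Qed.

Lemma derivable_powR_d x j s : x != 0 -> derivable (fun y => d y `^ s) x (ej R j).
Proof. by move=> x0; apply: derivable_powR; [exact: derivable_d | exact: d_gt0]. Qed.

Lemma coord_derivable_gradL x : x != 0 -> coord_derivable G x.
Proof.
move=> x0 i j; have -> : (fun y => G y 0 i) = Xfield sigma i d.
  by apply/funext => y; rewrite mxE.
apply: derivable_sumf => k; apply: derivableM => //.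
exact: (d_smooth [:: k] x0).2.
Qed.

Lemma derivable_sqr_enorm_gradL x j : x != 0 ->
  derivable (fun y => enorm (G y) ^+ 2) x (ej R j).
Proof.
move=> x0; have -> : (fun y => enorm (G y) ^+ 2) = (fun y => \sum_i G y 0 i * G y 0 i).
  by apply/funext => y; rewrite -edotvv.
by apply: derivable_sumf => i; apply: derivableM; exact: coord_derivable_gradL.
Qed.

Lemma derivable_enorm_gradL x j : x != 0 -> G x != 0 ->
  derivable (fun y => enorm (G y)) x (ej R j).
Proof.
move=> x0 Gx0.
have -> : (fun y => enorm (G y)) = Num.sqrt \o (fun y => enorm (G y) ^+ 2).
  by apply/funext => y; rewrite /= sqrtr_sqr_enorm.
have sqr_gt0 : 0 < enorm (G x) ^+ 2 by rewrite exprn_gt0 ?enorm_gt0.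
have sqrD := derivableP (derivable_sqr_enorm_gradL (j := j) x0).
by case: (is_derive_comp sqrD (is_derive1_sqrt sqr_gt0)).
Qed.

Lemma powR_enorm_gradL_cvg_line x j s : x != 0 -> G x = 0 -> 0 <= s ->
  (fun t : R => enorm (G (t *: ej R j + x)) `^ s) @ 0^' --> enorm (G x) `^ s.
Proof.
move=> x0 Gx0 s_ge0.
have normC : (fun t : R => enorm (G (t *: ej R j + x))) @ 0^' --> enorm (G x).
  have -> : (fun t : R => enorm (G (t *: ej R j + x))) =
      Num.sqrt \o (fun t => enorm (G (t *: ej R j + x)) ^+ 2).
    by apply/funext => t; rewrite /= sqrtr_sqr_enorm.
  rewrite -[enorm (G x)]sqrtr_sqr_enorm.
  exact: cvg_comp (derivable_cvg_line (derivable_sqr_enorm_gradL (j := j) x0))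
    (@sqrt_continuous R _).
rewrite Gx0 enorm0 in normC *.
exact: cvg_powR0 s_ge0 (fun t => enorm_ge0 _) normC.
Qed.

Lemma coord_derivable_pflux p x : x != 0 -> G x != 0 ->
  coord_derivable (pflux sigma p d) x.
Proof.
move=> x0 Gx0; apply: coord_derivableZ (coord_derivable_gradL x0) => j.
by apply: derivable_powR; [exact: derivable_enorm_gradL | rewrite enorm_gt0].
Qed.

Lemma Lp_comp (phi phi' : R -> R) (c b p : R) x : x != 0 ->
  (forall t : R, 0 < t -> is_derive t 1 phi (phi' t)) ->
  (forall t : R, 0 < t -> `|phi' t| `^ (p - 2) * phi' t = c * t `^ b) ->
  Lp sigma p (fun y => phi (d y)) x =
  divL sigma (fun y => (c * d y `^ b) *: pflux sigma p d y) x.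
Proof.
move=> x0 phiD phiE; apply: divL_near.
have : \forall y \near x, y != 0 by have := @cvgr_neq0 R _ _ (nbhs x) _ id x; apply.
apply: filterS => y y0; rewrite -phiE ?d_gt0 //.
exact: pflux_comp (fun j => derivable_d (j := j) y0) (phiD _ (d_gt0 y0)).
Qed.

(* The power of [d] is 1 - Q because ((p - Q) / (p - 1) - 1) (p - 1) = 1 - Q. *)
Lemma divL_pflux_gauge p x : 2 <= p -> x != 0 -> coord_derivable (pflux sigma p d) x ->
  divL sigma (fun y => d y `^ (1 - Q) *: pflux sigma p d y) x = 0.
Proof.
move=> p_ge2 x0 FD.
suff [c c0] : exists2 c, c != 0 &
    divL sigma (fun y => (c * d y `^ (1 - Q)) *: pflux sigma p d y) x = 0.
  under eq_fun do rewrite -scalerA.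
  rewrite (divLZ sigma_derivable); last first.
    exact: coord_derivableZ (fun j => derivable_powR_d (j := j) x0) FD.
  by move/eqP; rewrite mulf_eq0 (negbTE c0) => /eqP.
have p1_neq0 : p - 1 != 0 by rewrite subr_eq0 gt_eqF //; lra.
have [pQ|pQ] := eqVneq p Q.
  exists (-1); first by rewrite oppr_eq0 oner_eq0.
  rewrite -((d_fundamental p_ge2).2 pQ x x0) -pQ; symmetry.
  apply: (Lp_comp (phi := fun t => - ln t) (phi' := fun t => - t^-1)) => // t t_gt0.
    exact: is_deriveN (is_derive1_ln t_gt0).
  have -> : - t^-1 = -1 * t `^ (-1) by rewrite powR_inv1 ?ltW // mulN1r.
  rewrite powR_normM // normrN1 powR1.
  by congr (_ * powR _ _); ring.
set a := (p - Q) / (p - 1).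
have a_neq0 : a != 0 by rewrite mulf_neq0 ?invr_eq0 // subr_eq0.
exists (`|a| `^ (p - 2) * a); first by rewrite mulf_neq0 // gt_eqF // powR_gt0 // normr_gt0.
rewrite -((d_fundamental p_ge2).1 pQ x x0); symmetry.
apply: (Lp_comp (phi := fun t : R => t `^ a) (phi' := fun t : R => a * t `^ (a - 1)))
  => // t t_gt0.
rewrite powR_normM //; congr (_ * powR _ _).
by rewrite /a; field.
Qed.

Lemma Lp_gauge_derivable p x : 2 <= p -> x != 0 -> coord_derivable (pflux sigma p d) x ->
  Lp sigma p d x = (Q - 1) * enorm (G x) `^ p / d x.
Proof.
move=> p_ge2 x0 FD; have := divL_pflux_gauge p_ge2 x0 FD.
rewrite (divL_scalar_mul sigma_derivable) //; last by move=> j; exact: derivable_powR_d.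
rewrite -LpE (gradL_comp sigma (fun j => derivable_d (j := j) x0)
  (is_derive1_powR (1 - Q) (d_gt0 x0))).
have p_neq0 : p != 0 by rewrite gt_eqF //; lra.
rewrite /pflux edotZl edotZr edotvv powR_mul_sqr ?enorm_ge0 //.
have dx_gt0 := d_gt0 x0; set e := d x `^ (1 - Q - 1).
have e_neq0 : e != 0 by rewrite gt_eqF // powR_gt0.
have -> : d x `^ (1 - Q) = e * d x.
  by rewrite /e -{3}(powRr1 (ltW dx_gt0)) -powRD ?subrK // (gt_eqF dx_gt0) implybT.
move=> H; have /eqP : e * (d x * Lp sigma p d x - (Q - 1) * enorm (G x) `^ p) = 0.
  by rewrite -H; ring.
rewrite mulf_eq0 (negbTE e_neq0) subr_eq0 /= => /eqP <-.
by field; rewrite gt_eqF.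
Qed.

Lemma Lp_gauge p x : 2 <= p -> x != 0 -> Lp sigma p d x = (Q - 1) * enorm (G x) `^ p / d x.
Proof.
move=> p_ge2 x0; have [Gx0|Gx_neq0] := eqVneq (G x) 0; last first.
  exact: Lp_gauge_derivable (coord_derivable_pflux (p := p) x0 Gx_neq0).
have p_neq0 : p != 0 by rewrite gt_eqF //; lra.
have divG0 : divL sigma G x = 0.
  rewrite -pflux2 -LpE Lp_gauge_derivable ?lexx ?pflux2 ?Gx0 ?enorm0 ?powR0 ?mulr0 ?mul0r //.
  exact: coord_derivable_gradL.
rewrite LpE (divL_scalar_mul_eq0 sigma_derivable (coord_derivable_gradL x0) Gx0).
  by rewrite divG0 mulr0 Gx0 enorm0 powR0 // mulr0 mul0r.
by move=> j; apply: powR_enorm_gradL_cvg_line => //; lra.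
Qed.

Lemma divL_powR_gradL x : x != 0 -> divL sigma (fun y => d y `^ (1 - Q) *: G y) x = 0.
Proof.
move=> x0; have := divL_pflux_gauge (lexx 2) x0; rewrite pflux2; apply.
exact: coord_derivable_gradL.
Qed.

Lemma gradL_enorm_gradL_orth x : x != 0 ->
  edot (gradL sigma (fun y => enorm (G y)) x) (G x) = 0.
Proof.
move=> x0; have [->|Gx0] := eqVneq (G x) 0; first exact: edot0r.
have := divL_pflux_gauge (ler_nat _ 2 3) x0 (coord_derivable_pflux (p := 3) x0 Gx0).
have -> : (fun y => d y `^ (1 - Q) *: pflux sigma 3 d y) =
    (fun y => enorm (G y) *: (d y `^ (1 - Q) *: G y)).
  apply/funext => y; rewrite /pflux (_ : 3 - 2 = 1 :> R); last by ring.
  by rewrite powRr1 ?enorm_ge0 // !scalerA mulrC.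
rewrite (divL_scalar_mul sigma_derivable); first last.
- exact: coord_derivableZ (fun j => derivable_powR_d (j := j) x0) (coord_derivable_gradL x0).
- by move=> j; exact: derivable_enorm_gradL.
rewrite divL_powR_gradL // mulr0 add0r edotZr => /eqP.
by rewrite mulf_eq0 gt_eqF ?powR_gt0 ?d_gt0 //= => /eqP.
Qed.

Lemma divL_weighted_gradL s x : 0 <= s -> x != 0 ->
  divL sigma (fun y => (enorm (G y) `^ s / d y `^ (Q - 1)) *: G y) x = 0.
Proof.
move=> s_ge0 x0.
have -> : (fun y => (enorm (G y) `^ s / d y `^ (Q - 1)) *: G y) =
    (fun y => enorm (G y) `^ s *: (d y `^ (1 - Q) *: G y)).
  by apply/funext => y; rewrite scalerA -powRN opprB.
have ZD := coord_derivableZ (fun j => derivable_powR_d (j := j) (s := 1 - Q) x0)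
  (coord_derivable_gradL x0).
have [Gx0|Gx_neq0] := eqVneq (G x) 0.
  rewrite (divL_scalar_mul_eq0 sigma_derivable ZD); first by rewrite divL_powR_gradL ?mulr0.
    by rewrite Gx0 scaler0.
  by move=> j; exact: powR_enorm_gradL_cvg_line x0 Gx0 s_ge0.
have normG_gt0 : 0 < enorm (G x) by rewrite enorm_gt0.
rewrite (divL_scalar_mul sigma_derivable) //; last first.
  by move=> j; apply: derivable_powR; [exact: derivable_enorm_gradL | exact: normG_gt0].
rewrite divL_powR_gradL // mulr0 add0r.
rewrite (gradL_comp sigma (fun j => derivable_enorm_gradL (j := j) x0 Gx_neq0)
  (is_derive1_powR s normG_gt0)).
by rewrite edotZl edotZr gradL_enorm_gradL_orth // !mulr0.
Qed.

End Gauge.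

Theorem mainTheorem6 (R : realType) (N h : nat)
  (sigma : 'I_h -> 'I_N -> 'rV[R]_N -> R)
  (beta : 'I_N -> R) (d : 'rV[R]_N -> R) :
  (h <= N)%N ->
  (forall i j, C1_partials (sigma i j)) ->
  (forall j, 0 < beta j) ->
  (forall (f : 'rV[R]_N -> R), Cinf_on setT f ->
     forall (lam : R), 0 < lam -> forall (i : 'I_h) (x : 'rV[R]_N),
       Xfield sigma i (f \o dil beta lam) x
       = lam * Xfield sigma i f (dil beta lam x)) ->
  let Q := \sum_(j < N) beta j in
  (forall x, 0 <= d x) ->
  continuous d ->
  Cinf_on [set x | x != 0] d ->
  (forall x, d x = 0 <-> x = 0) ->
  (forall (lam : R) x, 0 < lam -> d (dil beta lam x) = lam * d x) ->
  (forall p : R, 2 <= p ->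
     (p != Q -> forall x, x != 0 ->
        Lp sigma p (fun y => powR (d y) ((p - Q) / (p - 1))) x = 0) /\
     (p = Q -> forall x, x != 0 ->
        Lp sigma Q (fun y => - ln (d y)) x = 0)) ->
  forall (p alpha : R), 2 <= p -> 0 <= alpha ->
  forall x : 'rV[R]_N, x != 0 ->
    Lp sigma p d x = (Q - 1) * powR (enorm (gradL sigma d x)) p / d x /\
    edot (gradL sigma (fun y => enorm (gradL sigma d y)) x) (gradL sigma d x) = 0 /\
    divL sigma (fun y => (powR (enorm (gradL sigma d y)) (alpha + p - 2)
                           / powR (d y) (Q - 1)) *: gradL sigma d y) x = 0.
Proof.
move=> _ sigma_C1 _ _ Q d_ge0 _ d_smooth d_eq0 _ d_fundamental.
move=> p alpha p_ge2 alpha_ge0 x x0.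
have sigma_derivable i j k y : derivable (sigma i j) y (ej R k) := (sigma_C1 i j).2.1 k y.
have d_gt0 y : y != 0 -> 0 < d y.
  by move=> y0; rewrite lt_def d_ge0 andbT; apply: contra_neq y0 => /d_eq0.
split; first exact: Lp_gauge.
split; first exact: (gradL_enorm_gradL_orth _ d_smooth _ d_fundamental).
by apply: divL_weighted_gradL => //; lra.
Qed.
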